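(* Let $H$ be an admissible Hamiltonian with vector field $f$ and Hessian $\mathcal H$, and let $g=J\nabla K$ be associated to $f$ via $B$, with $\mathcal K=\nabla^2K=B\mathcal H$. Then for all $x$: $$g'(x)g(x)=f'(x)f(x),\qquad (g'(x))^2=(f'(x))^2,$$ $$J(x)\mathcal H\,J(x)\mathcal K=J(x)\mathcal K\,J(x)\mathcal H,\qquad (J(x)\mathcal H)^2=(J(x)\mathcal K)^2,\qquad (\mathcal HJ(x))^2=(\mathcal KJ(x))^2.$$
   Context: Fix an integer $n\ge 2$. Points of $\mathbb R^{2n}$ are $x=(x_1,\dots,x_{2n})^{T}$; write $u=(x_1,\dots,x_n)^T$. Let $X(u)$ be the $n\times n$ matrix with entries $X(u)_{ij}=x_{k}$ where $k\in\{1,\dots,n\}$, $k\equiv i+j-1 \pmod n$, and let $J(x)=\begin{pmatrix}0&X(u)\\-X(u)&0\end{pmatrix}$. Let $\mathcal P$ be the $n\times n$ cyclic shift matrix ($\mathcal P_{i,i+1}=1$ for $1\le i\le n-1$, $\mathcal P_{n,1}=1$, all other entries $0$) and $A=\begin{pmatrix}\mathcal P&0\\0&\mathcal P\end{pmatrix}$. An admissible Hamiltonian is a homogeneous quadratic form $H(x)=\tfrac12 x^T\mathcal H x$ with a constant symmetric matrix $\mathcal H=\nabla^2H$ satisfying $A\mathcal H=\mathcal H A^T$; its Hamiltonian vector field is $f(x)=J(x)\nabla H(x)$ and $f'(x)$ denotes the Jacobi matrix of $f$. Associated vector fields: let $B=\sum_{i=0}^{n-1}\alpha_iA^i$ with $\alpha_i\in\mathbb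 C$ and $B^2=I$. If $H$ is an admissible Hamiltonian with vector field $f$, put $K(x)=\tfrac12 x^T B\mathcal H x$ (so $\nabla K=B\nabla H$) and $g(x)=J(x)\nabla K(x)=B^Tf(x)$; $g$ is said to be associated to $f$ via $B$. *)

(* Scalars: algC (algebraic complex numbers); real data is
   expressed by requiring entries to be in Num.real. Indices are 0-based. *)
From HB Require Import structures.
From mathcomp Require Import all_boot all_order all_algebra all_field.
Set Implicit Arguments. Unset Strict Implicit. Unset Printing Implicit Defensive.
Import Order.TTheory GRing.Theory Num.Theory.
Local Open Scope ring_scope.

(* X(u)_{ij} = x_k with k = i+j-1 mod n (1-based), i.e. k = (i+j) mod n 0-based *)
Definition Xmat (n : nat) (x : 'cV[algC]_(n + n)) : 'M[algC]_n :=
  \matrix_(i < n, j < n) \sum_(k < n | k == ((i + j) %% n)%N :> nat) (usubmx x) k 0.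

Definition Jmat (n : nat) (x : 'cV[algC]_(n + n)) : 'M[algC]_(n + n) :=
  block_mx 0 (Xmat x) (- Xmat x) 0.

Definition Pshift (n : nat) : 'M[algC]_n :=
  \matrix_(i < n, j < n) (((j : nat) == ((i + 1) %% n)%N) %:R).

Definition Amat (n : nat) : 'M[algC]_(n + n) := block_mx (Pshift n) 0 0 (Pshift n).

Definition admissible (n : nat) (H : 'M[algC]_(n + n)) : Prop :=
  (forall i j, H i j \is Num.real) /\ H^T = H /\ Amat n *m H = H *m (Amat n)^T.

Definition realvec (n : nat) (x : 'cV[algC]_(n + n)) : Prop :=
  forall i, x i 0 \is Num.real.

(* Hamiltonian vector field of the quadratic form (1/2) x^T M x : J(x) M x *)
Definition hamvf (n : nat) (M : 'M[algC]_(n + n)) (x : 'cV[algC]_(n + n))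
  : 'cV[algC]_(n + n) := Jmat x *m M *m x.

(* Jacobi matrix of the polynomial map x |-> J(x) M x. Since J is linear in x,
   d/dx_k [J(x) M x] = J(e_k) M x + J(x) M e_k. *)
Definition hamvf_jac (n : nat) (M : 'M[algC]_(n + n)) (x : 'cV[algC]_(n + n))
  : 'M[algC]_(n + n) :=
  \matrix_(i, k) ((Jmat (delta_mx k 0) *m (M *m x)) i 0) + Jmat x *m M.

Definition Bmat (n : nat) (alpha : 'I_n -> algC) : 'M[algC]_(n + n) :=
  \sum_(i < n) alpha i *: (Amat n) ^+ i.

From HB Require Import structures.
From mathcomp Require Import all_boot all_algebra all_field.
Set Implicit Arguments. Unset Strict Implicit. Unset Printing Implicit Defensive.
Import GRing.Theory.
Local Open Scope ring_scope.

(* For B = sum_i alpha_i A^i the cyclic shift carries everything: P^T X(u) = X(u) P = X(P^T u)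
   for the circulant Hankel block X(u), hence B^T J(v) = J(v) B and J(B^T v) = J(v) B, and
   admissibility gives B H = H B^T.  Consequently J(x) K = B^T J(x) H, g = B^T f and g' = B^T f',
   while f', J(x) H commute with B^T and H J(x) commutes with B.  As B and B^T are involutions,
   the factor B^T (resp. B) cancels in each of the five products. *)

Definition ord_add n (i j : 'I_n) : 'I_n :=
  Ordinal (ltn_pmod (i + j) (leq_ltn_trans (leq0n i) (ltn_ord i))).

Lemma ord_addE n (i j : 'I_n) : ord_add i j = ((i + j) %% n)%N :> nat.
Proof. by []. Qed.

Lemma ord_predE n (i : 'I_n) : ord_pred i = ((i + n.-1) %% n)%N :> nat.
Proof. by case: n i => [[]//|n] i; rewrite /= addnS. Qed.

Lemma ord_add_predl n (i j : 'I_n) : ord_add (ord_pred i) j = ord_pred (ord_add i j).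
Proof. by apply: ord_inj; rewrite ord_addE !ord_predE ord_addE modnDml modnDml addnAC. Qed.

Lemma ord_add_predr n (i j : 'I_n) : ord_add i (ord_pred j) = ord_pred (ord_add i j).
Proof. by apply: ord_inj; rewrite ord_addE !ord_predE ord_addE modnDmr modnDml addnA. Qed.

Lemma PshiftE n (i j : 'I_n) : Pshift n i j = (j == ordS i)%:R.
Proof. by rewrite mxE addn1. Qed.

Lemma tr_Pshift_mulmx n p (M : 'M[algC]_(n, p)) :
  (Pshift n)^T *m M = \matrix_(i, j) M (ord_pred i) j.
Proof.
apply/matrixP => i j; rewrite !mxE (bigD1 (ord_pred i)) //= big1 => [|k nk].
  by rewrite mxE PshiftE ord_predK eqxx mul1r addr0.
by rewrite mxE PshiftE eq_sym (can2_eq (@ordSK n) (@ord_predK n)) (negbTE nk) mul0r.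
Qed.

Lemma mulmx_Pshift m n (M : 'M[algC]_(m, n)) :
  M *m Pshift n = \matrix_(i, j) M i (ord_pred j).
Proof.
apply/matrixP => i j; rewrite !mxE (bigD1 (ord_pred j)) //= big1 => [|k nk].
  by rewrite PshiftE ord_predK eqxx mulr1 addr0.
by rewrite PshiftE eq_sym (can2_eq (@ordSK n) (@ord_predK n)) (negbTE nk) mulr0.
Qed.

Definition circ_hankel n (u : 'cV[algC]_n) : 'M[algC]_n :=
  \matrix_(i, j) u (ord_add i j) 0.

Lemma Xmat_circ_hankel n (x : 'cV[algC]_(n + n)) : Xmat x = circ_hankel (usubmx x).
Proof.
apply/matrixP => i j; rewrite [LHS]mxE [RHS]mxE; apply: big_pred1 => k /=.
by rewrite /pred1 /= -val_eqE.
Qed.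

Lemma tr_Pshift_circ_hankel n (u : 'cV[algC]_n) :
  (Pshift n)^T *m circ_hankel u = circ_hankel u *m Pshift n.
Proof.
by rewrite tr_Pshift_mulmx mulmx_Pshift; apply/matrixP => i j; rewrite !mxE ord_add_predl ord_add_predr.
Qed.

Lemma circ_hankel_tr_Pshift n (u : 'cV[algC]_n) :
  circ_hankel ((Pshift n)^T *m u) = circ_hankel u *m Pshift n.
Proof.
by rewrite tr_Pshift_mulmx mulmx_Pshift; apply/matrixP => i j; rewrite !mxE ord_add_predr.
Qed.

Lemma Jmat_is_linear n : linear (@Jmat n).
Proof.
move=> a v w; rewrite /Jmat !Xmat_circ_hankel.
have -> : circ_hankel (usubmx (a *: v + w)) =
          a *: circ_hankel (usubmx v) + circ_hankel (usubmx w).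
  by apply/matrixP => i j; rewrite !mxE.
by rewrite scale_block_mx add_block_mx scaler0 addr0 scalerN opprD.
Qed.

HB.instance Definition _ n :=
  GRing.isLinear.Build algC _ _ _ (@Jmat n) (@Jmat_is_linear n).

Lemma tr_Amat_Jmat n (v : 'cV[algC]_(n + n)) : (Amat n)^T *m Jmat v = Jmat v *m Amat n.
Proof.
rewrite /Amat /Jmat tr_block_mx !trmx0 !mulmx_block Xmat_circ_hankel.
by rewrite !mul0mx !mulmx0 !addr0 !add0r mulmxN mulNmx tr_Pshift_circ_hankel.
Qed.

Lemma Jmat_tr_Amat n (v : 'cV[algC]_(n + n)) : Jmat ((Amat n)^T *m v) = Jmat v *m Amat n.
Proof.
have hu : usubmx ((Amat n)^T *m v) = (Pshift n)^T *m usubmx v.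
  by rewrite /Amat tr_block_mx !trmx0 -{1}(vsubmxK v) mul_block_col col_mxKu mul0mx addr0.
rewrite /Jmat !Xmat_circ_hankel hu circ_hankel_tr_Pshift /Amat mulmx_block.
by rewrite !mul0mx !mulmx0 !addr0 !add0r mulNmx.
Qed.

Section Intertwining.

Variables (R : comPzRingType) (m : nat).
Implicit Types (A C D : 'M[R]_m).

Lemma intertwineX A C D i : A *m C = C *m D -> A ^+ i *m C = C *m D ^+ i.
Proof.
move=> ACD; elim: i => [|i IH]; first by rewrite !expr0 mul1mx mulmx1.
by rewrite !exprS -!mulmxE -mulmxA IH mulmxA ACD mulmxA.
Qed.

Lemma intertwine_poly k (alpha : 'I_k -> R) A C D :
  A *m C = C *m D ->
  (\sum_i alpha i *: A ^+ i) *m C = C *m (\sum_i alpha i *: D ^+ i).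
Proof.
move=> ACD; rewrite mulmx_suml mulmx_sumr; apply: eq_bigr => i _.
by rewrite -scalemxAl -scalemxAr (intertwineX _ ACD).
Qed.

Lemma trmxX A i : (A ^+ i)^T = A^T ^+ i.
Proof.
elim: i => [|i IH]; first by rewrite !expr0 trmx1.
by rewrite exprS exprSr -!mulmxE trmx_mul IH.
Qed.

Lemma mulmx_involution_comm A X p (Y : 'M[R]_(m, p)) :
  A *m A = 1%:M -> X *m A = A *m X -> (A *m X) *m (A *m Y) = X *m Y.
Proof. by move=> AA XA; rewrite -mulmxA (mulmxA X) XA -!mulmxA (mulmxA A) AA mul1mx. Qed.

End Intertwining.

Lemma tr_Bmat n (alpha : 'I_n -> algC) :
  (Bmat alpha)^T = \sum_i alpha i *: (Amat n)^T ^+ i.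
Proof. by rewrite linear_sum; apply: eq_bigr => i _; rewrite linearZ /= trmxX. Qed.

Lemma Jmat_tr_AmatX n (v : 'cV[algC]_(n + n)) i :
  Jmat ((Amat n)^T ^+ i *m v) = Jmat v *m Amat n ^+ i.
Proof.
elim: i v => [|i IH] v; first by rewrite !expr0 mul1mx mulmx1.
by rewrite exprSr -mulmxE -mulmxA IH Jmat_tr_Amat exprS -mulmxE mulmxA.
Qed.

Section BmatIntertwining.

Variables (n : nat) (alpha : 'I_n -> algC).
Local Notation B := (Bmat alpha).

Lemma tr_Bmat_Jmat v : B^T *m Jmat v = Jmat v *m B.
Proof. by rewrite tr_Bmat (intertwine_poly _ (tr_Amat_Jmat v)). Qed.

Lemma Jmat_tr_Bmat v : Jmat (B^T *m v) = Jmat v *m B.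
Proof.
rewrite tr_Bmat mulmx_suml linear_sum mulmx_sumr; apply: eq_bigr => i _.
by rewrite -scalemxAl linearZ /= Jmat_tr_AmatX scalemxAr.
Qed.

Lemma Bmat_admissible H : admissible H -> B *m H = H *m B^T.
Proof. by case=> _ [_ AH]; rewrite tr_Bmat (intertwine_poly _ AH). Qed.

End BmatIntertwining.

Lemma mulmx_cVP (R : pzSemiRingType) m n (A C : 'M[R]_(m, n)) :
  (forall v : 'cV_n, A *m v = C *m v) -> A = C.
Proof.
move=> eqAC; apply/matrixP => i j.
by have := congr1 (fun u : 'cV_m => u i 0) (eqAC (delta_mx j 0)); rewrite -!colE !mxE.
Qed.

Definition Jmul_mx n (w : 'cV[algC]_(n + n)) : 'M[algC]_(n + n) :=
  \matrix_(i, k) (Jmat (delta_mx k 0) *m w) i 0.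

Lemma Jmul_mxE n (w v : 'cV[algC]_(n + n)) : Jmul_mx w *m v = Jmat v *m w.
Proof.
rewrite {2}(matrix_sum_delta v) linear_sum mulmx_suml; apply/matrixP => i l.
rewrite (ord1 l) !mxE summxE; apply: eq_bigr => k _.
by rewrite big_ord1 linearZ /= -scalemxAl !mxE mulrC.
Qed.

Lemma hamvf_jacE n (M : 'M[algC]_(n + n)) x :
  hamvf_jac M x = Jmul_mx (M *m x) + Jmat x *m M.
Proof. by []. Qed.

Section AssociatedField.

Variables (n : nat) (S : 'M[algC]_(n + n)).
Hypothesis trS_Jmat : forall v, S^T *m Jmat v = Jmat v *m S.
Hypothesis Jmat_trS : forall v, Jmat (S^T *m v) = Jmat v *m S.

Lemma Jmul_mx_trS_comm w : Jmul_mx w *m S^T = S^T *m Jmul_mx w.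
Proof.
apply: mulmx_cVP => v.
by rewrite -mulmxA Jmul_mxE Jmat_trS -[RHS]mulmxA Jmul_mxE mulmxA trS_Jmat.
Qed.

Lemma Jmul_mx_mul w : Jmul_mx (S *m w) = S^T *m Jmul_mx w.
Proof. by apply: mulmx_cVP => v; rewrite Jmul_mxE -mulmxA Jmul_mxE !mulmxA trS_Jmat. Qed.

Lemma Jmat_mul x p (M : 'M[algC]_(n + n, p)) : Jmat x *m (S *m M) = S^T *m (Jmat x *m M).
Proof. by rewrite !mulmxA trS_Jmat. Qed.

Lemma hamvf_mul (M : 'M[algC]_(n + n)) x : hamvf (S *m M) x = S^T *m hamvf M x.
Proof. by rewrite /hamvf Jmat_mul !mulmxA. Qed.

Lemma hamvf_jac_mul (M : 'M[algC]_(n + n)) x : hamvf_jac (S *m M) x = S^T *m hamvf_jac M x.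
Proof. by rewrite !hamvf_jacE -mulmxA Jmul_mx_mul Jmat_mul mulmxDr. Qed.

Variable M : 'M[algC]_(n + n).
Hypothesis SM : S *m M = M *m S^T.

Lemma Jmat_mulmx_trS_comm x : Jmat x *m M *m S^T = S^T *m (Jmat x *m M).
Proof. by rewrite -mulmxA -SM Jmat_mul. Qed.

Lemma mulmx_Jmat_comm x : M *m Jmat x *m S = S *m (M *m Jmat x).
Proof. by rewrite -mulmxA -trS_Jmat mulmxA -SM mulmxA. Qed.

Lemma hamvf_jac_trS_comm x : hamvf_jac M x *m S^T = S^T *m hamvf_jac M x.
Proof. by rewrite hamvf_jacE mulmxDl mulmxDr Jmul_mx_trS_comm Jmat_mulmx_trS_comm. Qed.

End AssociatedField.

Theorem mainTheorem17 (n : nat) (hn : (2 <= n)%N)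
  (H : 'M[algC]_(n + n)) (alpha : 'I_n -> algC)
  (hH : admissible H)
  (hB : Bmat alpha *m Bmat alpha = 1%:M)
  (x : 'cV[algC]_(n + n)) (hx : realvec x) :
  let K := Bmat alpha *m H in
  let f := hamvf H x in
  let g := hamvf K x in
  let f' := hamvf_jac H x in
  let g' := hamvf_jac K x in
  [/\ g' *m g = f' *m f,
      g' *m g' = f' *m f',
      Jmat x *m H *m (Jmat x *m K) = Jmat x *m K *m (Jmat x *m H),
      (Jmat x *m H) *m (Jmat x *m H) = (Jmat x *m K) *m (Jmat x *m K) &
      (H *m Jmat x) *m (H *m Jmat x) = (K *m Jmat x) *m (K *m Jmat x)].
Proof.
move=> K f g f' g'; set B := Bmat alpha.
have trBJ := @tr_Bmat_Jmat n alpha; have JtrB := @Jmat_tr_Bmat n alpha.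
have BH : B *m H = H *m B^T := Bmat_admissible alpha hH.
have trBB : B^T *m B^T = 1%:M by rewrite -trmx_mul hB trmx1.
have f'B : f' *m B^T = B^T *m f' := hamvf_jac_trS_comm trBJ JtrB BH x.
have JHB := Jmat_mulmx_trS_comm trBJ BH x.
have JK : Jmat x *m K = B^T *m (Jmat x *m H) := Jmat_mul trBJ x H.
have eg' : g' = B^T *m f' := hamvf_jac_mul trBJ H x.
split.
- by rewrite eg' /g (hamvf_mul trBJ) (mulmx_involution_comm _ trBB f'B).
- by rewrite eg' (mulmx_involution_comm _ trBB f'B).
- by rewrite JK mulmxA JHB.
- by rewrite JK (mulmx_involution_comm _ trBB JHB).
- by rewrite /K -[B *m H *m _]mulmxA (mulmx_involution_comm _ hB (mulmx_Jmat_comm trBJ BH x)).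
Qed.
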